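(* Let $P$ be a finite ranked poset with unique minimal element and with the non-nesting property, such that $|S(p)|>1$ whenever $p$ has rank greater than $1$. If $Q$ is a finite ranked poset with unique minimal element such that $Q\sim_BP$, then $P_{\ge2}\cong Q_{\ge2}$ as (ranked) posets.
   Context: A ranked poset has a rank function with $|x|=|y|+1$ whenever $x$ covers $y$ and $|x|=0$ iff $x$ is minimal. Its Hasse diagram is the layered graph with layers $P_i=\{p:|p|=i\}$ and an edge $(p,q)$ for each covering relation $p\gtrdot q$; $S(p)$ is the set of elements covered by $p$, and $P_{\ge j}=\bigcup_{i\ge j}P_i$ with the induced order. For a layered graph with vertex set $V=\bigsqcup V_i$, $V_+=\bigsqcup_{i\ge1}V_i$, $B(\Gamma)=T(V_+)/R_B$ over a field $\mathbb F$, where $R_B$ is the two-sided ideal generated by $\{vw: v,w\in V_+,(v,w)\notin E\}\cup\{v\sum_{w\in S(v)}w: v\in V_{\ge2}\}$; it is doubly graded with $v_1\cdots v_m$ in bidegree $(m,\sum|v_i|)$. $B(P)$ means $B$ of the Hasse diagram, and $Q\sim_BP$ means there is a doubly graded algebra isomorphism $B(P)\to B(Q)$. $P$ has the non-nesting property if for any two distinct elements $p,q$ each covering more than one element, $S(p)\not\subseteq S(q)$. *)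

From HB Require Import structures.
From mathcomp Require Import all_boot all_order all_algebra.
Set Implicit Arguments. Unset Strict Implicit. Unset Printing Implicit Defensive.
Import Order.TTheory GRing.Theory.

Definition covers d (P : finPOrderType d) (x y : P) : bool :=
  (y < x)%O && [forall z : P, ~~ ((y < z)%O && (z < x)%O)].

Definition minimal d (P : finPOrderType d) (x : P) : bool :=
  [forall z : P, ~~ (z < x)%O].

Definition is_rank d (P : finPOrderType d) (r : P -> nat) : Prop :=
  (forall x y : P, covers x y -> r x = (r y).+1) /\
  (forall x : P, (r x == 0%N) = minimal x).

Definition unique_minimal d (P : finPOrderType d) : Prop :=
  exists m : P, forall x : P, minimal x = (x == m).

Definition Sset d (P : finPOrderType d) (p : P) : {set P} := [set q | covers p q].

Definition non_nesting d (P : finPOrderType d) : Prop :=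
  forall p q : P, p != q -> (1 < #|Sset p|)%N -> (1 < #|Sset q|)%N ->
    ~~ (Sset p \subset Sset q).

(* ---------- The algebra B(P), presented as T(V_+)/R_B ---------- *)

Definition Vpos d (P : finPOrderType d) (r : P -> nat) := {x : P | (0 < r x)%N}.

(* elements of the free (tensor) algebra T(V) as finite formal sums of words *)
Definition fsum (F : fieldType) (V : Type) := seq (F * seq V).

Definition coef (F : fieldType) (V : eqType) (x : fsum F V) (u : seq V) : F :=
  (\sum_(p <- x) (if p.2 == u then p.1 else 0))%R.

Definition fscale (F : fieldType) (V : Type) (k : F) (x : fsum F V) : fsum F V :=
  [seq ((k * p.1)%R, p.2) | p <- x].

(* a * g * b for words a, b *)
Definition sandwich (F : fieldType) (V : Type) (a : seq V) (g : fsum F V) (b : seq V)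
  : fsum F V := [seq (p.1, a ++ p.2 ++ b) | p <- g].

(* generators of the ideal R_B of the Hasse diagram of P *)
Definition is_gen (F : fieldType) d (P : finPOrderType d) (r : P -> nat)
  (g : fsum F (Vpos r)) : Prop :=
  (exists v w : Vpos r, ~~ covers (val v) (val w) /\ g = [:: (1%R, [:: v; w])]) \/
  (exists v : Vpos r, (2 <= r (val v))%N /\
     g = [seq (1%R, [:: v; w]) | w <- enum [pred w : Vpos r | covers (val v) (val w)]]).

(* membership of an element (given by its coefficient function) in the
   two-sided ideal R_B generated by the generators above *)
Definition in_ideal (F : fieldType) d (P : finPOrderType d) (r : P -> nat)
  (f : seq (Vpos r) -> F) : Prop :=
  exists L : seq (F * seq (Vpos r) * fsum F (Vpos r) * seq (Vpos r)),
    (forall i, (i < size L)%N -> is_gen (nth (0%R, [::], [::], [::]) L i).1.2) /\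
    forall u, f u = coef (flatten [seq fscale t.1.1.1 (sandwich t.1.1.2 t.1.2 t.2) | t <- L]) u.

Definition eqB (F : fieldType) d (P : finPOrderType d) (r : P -> nat)
  (x y : fsum F (Vpos r)) : Prop :=
  in_ideal (coef (x ++ fscale (-1)%R y)).

(* the algebra homomorphism T(V) -> T(W) sending each generator v to
   sum_w c v w * w *)
Definition hom_word (F : fieldType) (V W : finType) (c : V -> W -> F) (a : seq V)
  : fsum F W :=
  foldr (fun v acc => [seq ((c v w * q.1)%R, w :: q.2) | w <- enum W, q <- acc])
        [:: (1%R, [::])] a.

Definition hom (F : fieldType) (V W : finType) (c : V -> W -> F) (x : fsum F V)
  : fsum F W :=
  flatten [seq fscale p.1 (hom_word c p.2) | p <- x].

(* Q ~_B P : there is a doubly graded algebra isomorphism B(P) -> B(Q).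
   It is given by the images of the generators (c), with inverse given by c'. *)
Definition B_iso (F : fieldType) d (P : finPOrderType d) (rP : P -> nat)
  d' (Q : finPOrderType d') (rQ : Q -> nat) : Prop :=
  exists (c : Vpos rP -> Vpos rQ -> F) (c' : Vpos rQ -> Vpos rP -> F),
    (* doubly graded: generator of bidegree (1,i) goes to bidegree (1,i) *)
    (forall v w, rP (val v) != rQ (val w) -> c v w = 0%R) /\
    (forall w v, rQ (val w) != rP (val v) -> c' w v = 0%R) /\
    (* well defined on the quotients *)
    (forall x, in_ideal (coef x) -> in_ideal (coef (hom c x))) /\
    (forall y, in_ideal (coef y) -> in_ideal (coef (hom c' y))) /\
    (forall v, eqB (hom c' (hom c [:: (1%R, [:: v])])) [:: (1%R, [:: v])]) /\
    (forall w, eqB (hom c (hom c' [:: (1%R, [:: w])])) [:: (1%R, [:: w])]).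

Definition Pge2 d (P : finPOrderType d) (r : P -> nat) := {x : P | (2 <= r x)%N}.

From Pilot Require Import Defs.
From HB Require Import structures.
From mathcomp Require Import all_boot all_order all_algebra zify ring.
Set Implicit Arguments. Unset Strict Implicit. Unset Printing Implicit Defensive.
Import Order.TTheory GRing.Theory.

(* The isomorphism is given on generators by a matrix c, with inverse c' on
   generators, and both induced algebra maps preserve the ideals R_B.
   Degree-1 elements are coordinate vectors y : V_+ -> F.  We first describe
   the quadratic part of R_B: an element of degree 2 lies in R_B iff for each
   v its coefficients on the words v w, w in S(v), agree.  Hence a product
   x y vanishes in B(P) iff y is constant on S(v) for every v in the support
   of x, and algebra maps preserving the ideals transport this condition.
   Using non-nesting, for p of rank >= 2 the row c p has a single nonzero
   entry q and the row c' q a single nonzero entry p.  This matching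
   preserves ranks (by the grading) and coverings (S(p) is recovered from the
   constancy conditions), so it is an isomorphism P_{>=2} ~ Q_{>=2}. *)

Section FiniteSums.
Local Open Scope ring_scope.
Variable F : fieldType.

Lemma sum_delta (I : finType) (P : pred I) (f : I -> F) (b : I) :
  \sum_(i | P i) f i * (i == b)%:R = (P b)%:R * f b.
Proof.
rewrite big_mkcond (bigD1 b) //= big1 ?addr0 => [|i /negbTE ->]; last first.
  by case: (P i); rewrite ?mulr0.
by rewrite eqxx mulr1; case: (P b); rewrite ?mul1r ?mul0r.
Qed.

Lemma sum_support1 (I : finType) (f g : I -> F) (i0 : I) :
  (forall i, f i != 0 -> i = i0) -> \sum_i f i * g i = f i0 * g i0.
Proof.
move=> H; rewrite (bigD1 i0) //= big1 ?addr0 // => i ii0.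
have [/H e|/negPn/eqP ->] := boolP (f i != 0); last by rewrite mul0r.
by move: ii0; rewrite e eqxx.
Qed.

Lemma sum_nonzero_term (I : finType) (f g : I -> F) :
  \sum_i f i * g i != 0 -> exists2 i, f i != 0 & g i != 0.
Proof.
case: (pickP (fun i => (f i != 0) && (g i != 0))) => [i /andP [] | none]; first by exists i.
rewrite big1 ?eqxx // => i _.
by move: (none i) => /= /negbT /nandP [] /negPn /eqP ->; rewrite ?mul0r ?mulr0.
Qed.

End FiniteSums.

Definition delta {F : fieldType} {I : eqType} (b : I) : I -> F := fun i => (i == b)%:R%R.

Section FormalSums.
Local Open Scope ring_scope.
Variables (F : fieldType) (V : eqType).

Lemma coef_cat (x y : fsum F V) u : coef (x ++ y) u = coef x u + coef y u.
Proof. by rewrite /coef big_cat. Qed.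

Lemma coef_flatten (s : seq (fsum F V)) u :
  coef (flatten s) u = \sum_(x <- s) coef x u.
Proof.
elim: s => [|x s IH] /=; first by rewrite /coef !big_nil.
by rewrite coef_cat IH big_cons.
Qed.

Lemma coef_fscale k (x : fsum F V) u : coef (fscale k x) u = k * coef x u.
Proof.
rewrite /coef /fscale big_map mulr_sumr; apply: eq_bigr => p _ /=.
by case: ifP; rewrite ?mulr0.
Qed.

Lemma coef_eq0 (x : fsum F V) u : (forall p, p \in x -> p.2 != u) -> coef x u = 0.
Proof. by move=> H; rewrite /coef big_seq big1 // => p /H /negbTE ->. Qed.

Lemma coef_sandwich0 (g : fsum F V) u : coef (sandwich [::] g [::]) u = coef g u.
Proof. by rewrite /coef /sandwich big_map; apply: eq_bigr => p _; rewrite cats0. Qed.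

Lemma coef_sandwich_size (a b : seq V) (g : fsum F V) n u :
  (forall p, p \in g -> size p.2 = n) -> size u != (size a + n + size b)%N ->
  coef (sandwich a g b) u = 0.
Proof.
move=> Hg su; apply: coef_eq0 => _ /mapP [p /Hg Hp ->] /=.
by apply: contra su => /eqP <-; rewrite !size_cat Hp addnA.
Qed.

End FormalSums.

Section Ideal.
Local Open Scope ring_scope.
Variables (F : fieldType) (d : Order.disp_t) (X : finPOrderType d) (r : X -> nat).
Local Notation V := (Vpos r).
Local Notation term := (F * seq V * fsum F V * seq V)%type.

Lemma in_idealP (f : seq V -> F) : in_ideal f <->
  exists L : seq term, (forall t, t \in L -> is_gen t.1.2) /\
    forall u, f u = \sum_(t <- L) t.1.1.1 * coef (sandwich t.1.1.2 t.1.2 t.2) u.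
Proof.
have E (L : seq term) u :
    coef (flatten [seq fscale t.1.1.1 (sandwich t.1.1.2 t.1.2 t.2) | t <- L]) u =
    \sum_(t <- L) t.1.1.1 * coef (sandwich t.1.1.2 t.1.2 t.2) u.
  by rewrite coef_flatten big_map; apply: eq_bigr => t _; rewrite coef_fscale.
split=> -[L [HL Hf]]; exists L.
  split=> [t tL|u]; last by rewrite Hf E.
  by rewrite -(nth_index (0, [::], [::], [::]) tL); apply: HL; rewrite index_mem.
split=> [i iL|u]; last by rewrite Hf E.
by apply: HL; rewrite mem_nth.
Qed.

Lemma in_ideal_ext (f g : seq V -> F) : in_ideal f -> f =1 g -> in_ideal g.
Proof. by move=> [L [HL Hf]] fg; exists L; split => // u; rewrite -fg. Qed.

Lemma in_ideal0 : in_ideal (fun _ : seq V => 0 : F).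
Proof. by apply/in_idealP; exists [::]; split => // u; rewrite big_nil. Qed.

Lemma in_idealD (f g : seq V -> F) :
  in_ideal f -> in_ideal g -> in_ideal (fun u => f u + g u).
Proof.
move=> /in_idealP [L1 [H1 E1]] /in_idealP [L2 [H2 E2]].
apply/in_idealP; exists (L1 ++ L2); split => [t|u]; last by rewrite big_cat E1 E2.
by rewrite mem_cat => /orP [/H1|/H2].
Qed.

Lemma in_ideal_sum (I : Type) (s : seq I) (P : pred I) (f : I -> seq V -> F) :
  (forall i, P i -> in_ideal (f i)) ->
  in_ideal (fun u => \sum_(i <- s | P i) f i u).
Proof.
move=> H; elim: s => [|i s IH].
  by apply: (in_ideal_ext in_ideal0) => u; rewrite big_nil.
case Pi: (P i); last by apply: (in_ideal_ext IH) => u; rewrite big_cons Pi.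
by apply: (in_ideal_ext (in_idealD (H i Pi) IH)) => u; rewrite big_cons Pi.
Qed.

Lemma in_ideal_gen k (g : fsum F V) : is_gen g -> in_ideal (fun u => k * coef g u).
Proof.
move=> Hg; apply/in_idealP; exists [:: (k, [::], g, [::])]; split.
  by move=> t; rewrite inE => /eqP ->.
by move=> u; rewrite big_seq1 /= coef_sandwich0.
Qed.

Lemma gen_deg2 (g : fsum F V) : is_gen g -> forall p, p \in g -> size p.2 = 2%N.
Proof.
case=> [[v [w [_ ->]]]|[v [_ ->]]] p; first by rewrite inE => /eqP ->.
by case/mapP => w _ ->.
Qed.

Lemma in_ideal_deg1 (f : seq V -> F) : in_ideal f -> forall u, f [:: u] = 0.
Proof.
move=> /in_idealP [L [HL E]] u; rewrite E big_seq big1 // => t /HL Hg.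
by rewrite (coef_sandwich_size (gen_deg2 Hg)) ?mulr0 //=; lia.
Qed.

End Ideal.
Arguments in_ideal0 {F d X r}.

Section QuadraticPart.
Local Open Scope ring_scope.
Variables (F : fieldType) (d : Order.disp_t) (X : finPOrderType d) (r : X -> nat).
Local Notation V := (Vpos r).

Definition gen_edge (v w : V) : fsum F V := [:: (1, [:: v; w])].
Definition gen_cover (v : V) : fsum F V :=
  [seq (1, [:: v; w]) | w <- enum [pred w : V | covers (val v) (val w)]].

(* gen_cover v is a generator as soon as v covers an element of V_+,
   since v then has rank at least 2. *)
Lemma gen_cover_is_gen (v w : V) :
  is_rank r -> covers (val v) (val w) -> is_gen (gen_cover v).
Proof.
move=> [Hr _] cvw; right; exists v; split => //.
by rewrite (Hr _ _ cvw) ltnS (valP w).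
Qed.

Lemma coef_gen_edge v w u : coef (gen_edge v w) u = ([:: v; w] == u)%:R.
Proof. by rewrite /coef big_seq1 /=; case: eqP. Qed.

Lemma coef_gen_cover v u :
  coef (gen_cover v) u = \sum_(w | covers (val v) (val w)) ([:: v; w] == u)%:R.
Proof.
rewrite /coef /gen_cover big_map big_enum /=.
by apply: eq_bigr => w _; case: eqP.
Qed.

Lemma coef_gen_cover2 v a b :
  coef (gen_cover v) [:: a; b] = ((v == a) && covers (val a) (val b))%:R.
Proof.
rewrite coef_gen_cover; have [<-|va] := eqVneq v a; last first.
  by rewrite big1 // => w _; rewrite eqseq_cons (negbTE va).
rewrite -[RHS]mulr1.
rewrite -(sum_delta (fun w : V => covers (val v) (val w)) (fun=> 1) b).
by apply: eq_bigr => w _; rewrite mul1r !eqseq_cons eqxx andbT.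
Qed.

Definition row_constant (f : seq V -> F) : Prop := forall v w1 w2 : V,
  covers (val v) (val w1) -> covers (val v) (val w2) -> f [:: v; w1] = f [:: v; w2].

(* Each generator is row constant: a non-edge v' w' has no coefficient on
   covering pairs, and gen_cover v' has coefficient 1 on all of them. *)
Lemma gen_row_constant (g : fsum F V) : is_gen g -> row_constant (coef g).
Proof.
case=> [[v' [w' [ncov ->]]]|[v' [_ ->]]] v w1 w2 c1 c2; last first.
  by rewrite -/(gen_cover v') !coef_gen_cover2 c1 c2.
have edge_off w : covers (val v) (val w) -> ([:: v'; w'] == [:: v; w]) = false.
  by move=> cw; apply/eqP => -[ev ew]; move: ncov; rewrite ev ew cw.
by rewrite -/(gen_edge v' w') !coef_gen_edge !edge_off.
Qed.

Lemma in_ideal_row_constant (f : seq V -> F) : in_ideal f -> row_constant f.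
Proof.
move=> /in_idealP [L [HL E]] v w1 w2 c1 c2; rewrite !E.
apply: eq_big_seq => -[[[k a] g] b] /HL /= Hg; congr (_ * _).
have [/andP [/eqP -> /eqP ->]|ab] := boolP ((a == [::]) && (b == [::])).
  by rewrite !coef_sandwich0; apply: gen_row_constant.
have sab w : size [:: v; w] != (size a + 2 + size b)%N.
  by move: ab; case: a => [|? ?]; case: b => [|? ?] //= _; lia.
by rewrite !(coef_sandwich_size (gen_deg2 Hg)).
Qed.

Lemma deg2_expand (f : seq V -> F) : (forall u, size u != 2%N -> f u = 0) ->
  forall u, f u = \sum_v \sum_w f [:: v; w] * ([:: v; w] == u)%:R.
Proof.
move=> f0 u; have [|su] := eqVneq (size u) 2%N; last first.
  rewrite f0 // big1 // => v _; rewrite big1 // => w _.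
  by case: eqP => [e|_]; [rewrite -e in su | rewrite mulr0].
case: u => [|a [|b [|? ?]]] //= _.
have split_delta v w : ([:: v; w] == [:: a; b])%:R = (w == b)%:R * (v == a)%:R :> F.
  by rewrite !eqseq_cons andbT; do 2 case: eqP => _; rewrite ?mulr1 ?mulr0.
transitivity (\sum_v (\sum_w f [:: v; w] * (w == b)%:R) * (v == a)%:R).
  by rewrite sum_delta sum_delta !mul1r.
apply: eq_bigr => v _; rewrite mulr_suml; apply: eq_bigr => w _.
by rewrite split_delta mulrA.
Qed.

(* Conversely, a row constant element supported in degree 2 lies in R_B:
   each row v splits into the non-edges v w, which are generators, and the
   covered part, a multiple of the generator v * (sum of S(v)). *)
Lemma row_constant_in_ideal (f : seq V -> F) : is_rank r ->
  (forall u, size u != 2%N -> f u = 0) -> row_constant f -> in_ideal f.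
Proof.
move=> Hr f0 frow.
suff: in_ideal (fun u => \sum_v \sum_w f [:: v; w] * ([:: v; w] == u)%:R).
  by move/in_ideal_ext; apply=> u; rewrite -deg2_expand.
apply: in_ideal_sum => v _.
pose row (P : pred V) (u : seq V) : F := \sum_(w | P w) f [:: v; w] * ([:: v; w] == u)%:R.
have covered : in_ideal (row (fun w => covers (val v) (val w))).
  case: (pickP (fun w : V => covers (val v) (val w))) => [w0 cw0|none].
    apply: (in_ideal_ext (in_ideal_gen (f [:: v; w0]) (gen_cover_is_gen Hr cw0))) => u.
    rewrite coef_gen_cover mulr_sumr; apply: eq_bigr => w cw.
    by rewrite (frow v w0 w).
  by apply: (in_ideal_ext in_ideal0) => u; rewrite /row big_pred0.
have uncovered : in_ideal (row (fun w => ~~ covers (val v) (val w))).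
  apply: in_ideal_sum => w ncov.
  have edge : is_gen (gen_edge v w : fsum F V) by left; exists v, w.
  by apply: (in_ideal_ext (in_ideal_gen (f [:: v; w]) edge)) => u; rewrite coef_gen_edge.
apply: (in_ideal_ext (in_idealD covered uncovered)) => u.
by rewrite [RHS](bigID (fun w => covers (val v) (val w))).
Qed.

End QuadraticPart.

(* Products of two degree-1 elements given by coordinate vectors x and y:
   tensor x y is the coefficient function of the product x y. *)
Definition tensor (F : fieldType) (V : Type) (x y : V -> F) (u : seq V) : F :=
  if u is [:: a; b] then (x a * y b)%R else 0%R.

Section Tensors.
Local Open Scope ring_scope.
Variables (F : fieldType) (d : Order.disp_t) (X : finPOrderType d) (r : X -> nat).
Local Notation V := (Vpos r).

Definition const_below (v : V) (y : V -> F) : Prop := forall w1 w2 : V,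
  covers (val v) (val w1) -> covers (val v) (val w2) -> y w1 = y w2.

Lemma tensor_in_ideal_const (x y : V -> F) :
  in_ideal (tensor x y) -> forall v, x v != 0 -> const_below v y.
Proof.
move=> /in_ideal_row_constant Hrow v xv w1 w2 c1 c2.
exact: (mulfI xv (Hrow v w1 w2 c1 c2)).
Qed.

Lemma const_tensor_in_ideal (x y : V -> F) : is_rank r ->
  (forall v, x v != 0 -> const_below v y) -> in_ideal (tensor x y).
Proof.
move=> Hr H; apply: row_constant_in_ideal => // [[|a [|b [|? ?]]] //|v w1 w2 c1 c2 /=].
have [->|xv] := eqVneq (x v) 0; first by rewrite !mul0r.
by rewrite (H v xv w1 w2 c1 c2).
Qed.

Lemma const_below_ext (v : V) (y z : V -> F) : y =1 z -> const_below v y -> const_below v z.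
Proof. by move=> yz H w1 w2 c1 c2; rewrite -!yz; apply: H. Qed.

Lemma const_belowZ (v : V) (k : F) (y : V -> F) : k != 0 ->
  const_below v (fun b => k * y b) <-> const_below v y.
Proof.
move=> k0; split=> H w1 w2 c1 c2; last by rewrite (H w1 w2 c1 c2).
exact: (mulfI k0 (H w1 w2 c1 c2)).
Qed.

Lemma delta_const_below (v w : V) : ~~ covers (val v) (val w) -> const_below v (delta w).
Proof.
move=> ncov w1 w2 c1 c2; rewrite /delta.
have off w' : covers (val v) (val w') -> (w' == w) = false.
  by move=> cw'; apply: contraNF ncov => /eqP <-.
by rewrite (off w1 c1) (off w2 c2).
Qed.

Lemma delta_not_const_below (v w1 w2 : V) : covers (val v) (val w1) ->
  covers (val v) (val w2) -> w1 != w2 -> ~ const_below v (delta w1).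
Proof.
move=> c1 c2 n12 /(_ w1 w2 c1 c2); rewrite /delta eqxx eq_sym (negbTE n12).
by move/eqP; rewrite oner_eq0.
Qed.

Lemma covers_delta (v w : V) : (exists y : V -> F, ~ const_below v y) ->
  covers (val v) (val w) <-> ~ const_below v (delta w).
Proof.
move=> [y ny]; split => [cw H|H]; last first.
  by apply/negPn/negP => /delta_const_below /H.
apply: ny => w1 w2 c1 c2; suff eqw w' : covers (val v) (val w') -> w' = w.
  by rewrite (eqw w1 c1) (eqw w2 c2).
move=> cw'; have [//|nw] := eqVneq w' w.
by case: (delta_not_const_below cw cw' _ H); rewrite eq_sym.
Qed.

Lemma two_covered (v : V) : is_rank r -> (2 <= r (val v))%N ->
  (1 < #|Sset (val v)|)%N ->
  exists w1 w2 : V, [/\ covers (val v) (val w1), covers (val v) (val w2) & w1 != w2].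
Proof.
move=> [Hr _] h2 /card_gt1P [z1 [z2 [+ + n12]]]; rewrite !inE => c1 c2.
have p1 : (0 < r z1)%N by move: h2; rewrite (Hr _ _ c1).
have p2 : (0 < r z2)%N by move: h2; rewrite (Hr _ _ c2).
by exists (exist _ z1 p1), (exist _ z2 p2).
Qed.

Lemma not_const_below_covered (v w : V) : is_rank r -> (2 <= r (val v))%N ->
  (1 < #|Sset (val v)|)%N -> covers (val v) (val w) -> ~ const_below v (delta w).
Proof.
move=> Hr h2 hS cw; have [w1 [w2 [c1 c2 n12]]] := two_covered Hr h2 hS.
have [e1|n1] := eqVneq w1 w; last by apply: (delta_not_const_below cw c1); rewrite eq_sym.
by apply: (delta_not_const_below cw c2); rewrite -e1.
Qed.

End Tensors.

Section LinearMaps.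
Local Open Scope ring_scope.
Variables (F : fieldType) (V W : finType) (c : V -> W -> F).

(* The linear map on coordinate vectors sending the generator v to
   sum_w c v w * w; it is the degree-1 part of hom c. *)
Definition lin (x : V -> F) : W -> F := fun b => \sum_a c a b * x a.

Lemma lin_delta (v : V) : lin (delta v) =1 c v.
Proof. by move=> b; rewrite /lin /delta sum_delta mul1r. Qed.

Lemma size_hom_word (a : seq V) p : p \in hom_word c a -> size p.2 = size a.
Proof.
elim: a p => [|v a IH] p /=; first by rewrite inE => /eqP ->.
by case/allpairsP => -[w q] [_ /IH Hq ->] /=; rewrite Hq.
Qed.

Lemma coef_hom_word_size (a : seq V) u : size u != size a -> coef (hom_word c a) u = 0.
Proof.
move=> su; apply: coef_eq0 => p /size_hom_word Hp.
by apply: contra su => /eqP <-; rewrite Hp.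
Qed.

Lemma coef_hom_word_cons v (a : seq V) b u :
  coef (hom_word c (v :: a)) (b :: u) = c v b * coef (hom_word c a) u.
Proof.
rewrite /coef /= big_allpairs_dep big_enum /= (bigD1 b) //= [X in _ + X]big1 ?addr0 => [|w wb].
  rewrite mulr_sumr; apply: eq_bigr => q _; rewrite eqseq_cons eqxx /=.
  by case: ifP; rewrite ?mulr0.
by rewrite big1 // => q _; rewrite eqseq_cons (negbTE wb).
Qed.

Lemma coef_hom_word1 v b : coef (hom_word c [:: v]) [:: b] = c v b.
Proof. by rewrite coef_hom_word_cons /coef big_seq1 eqxx mulr1. Qed.

Lemma coef_hom (s : fsum F V) u :
  coef (Defs.hom c s) u = \sum_(p <- s) p.1 * coef (hom_word c p.2) u.
Proof.
by rewrite /Defs.hom coef_flatten big_map; apply: eq_bigr => p _; rewrite coef_fscale.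
Qed.

Lemma coef_hom_deg1 (s : fsum F V) b :
  coef (Defs.hom c s) [:: b] = \sum_a coef s [:: a] * c a b.
Proof.
rewrite coef_hom; under [RHS]eq_bigr do rewrite /coef mulr_suml.
rewrite exchange_big; apply: eq_bigr => -[k [|a0 [|? ?]]] _.
- by rewrite coef_hom_word_size // mulr0 big1 // => a _; rewrite mul0r.
- rewrite coef_hom_word1 (bigD1 a0) //= eqxx big1 ?addr0 // => a aa0.
  by rewrite eqseq_cons eq_sym (negbTE aa0) mul0r.
- by rewrite coef_hom_word_size // mulr0 big1 // => a _; rewrite eqseq_cons andbF mul0r.
Qed.

Definition tensor_elt (x y : V -> F) : fsum F V :=
  [seq (x v * y w, [:: v; w]) | v <- enum V, w <- enum V].

Lemma coef_tensor_elt (x y : V -> F) u : coef (tensor_elt x y) u = tensor x y u.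
Proof.
rewrite /coef big_allpairs_dep /=.
case: u => [|a [|b [|? ?]]] /=; try by rewrite big1 // => v _; rewrite big1 // => w _;
  rewrite !eqseq_cons ?andbF.
rewrite big_enum (bigD1 a) //= [X in _ + X]big1 ?addr0 => [|v va]; last first.
  by rewrite big1 // => w _; rewrite eqseq_cons (negbTE va).
rewrite big_enum (bigD1 b) //= [X in _ + X]big1 ?addr0 => [|w wb].
  by rewrite !eqxx.
by rewrite !eqseq_cons eqxx (negbTE wb).
Qed.

Lemma coef_hom_tensor_elt (x y : V -> F) u :
  coef (Defs.hom c (tensor_elt x y)) u = tensor (lin x) (lin y) u.
Proof.
rewrite coef_hom big_allpairs_dep.
case: u => [|a [|b [|? ?]]]; rewrite [RHS]/=; try by rewrite big1 // => v _; rewrite big1 // => w _;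
  rewrite coef_hom_word_size ?mulr0.
rewrite /lin mulr_suml big_enum; apply: eq_bigr => v _.
rewrite mulr_sumr big_enum; apply: eq_bigr => w _.
by rewrite coef_hom_word_cons coef_hom_word1 /=; ring.
Qed.

End LinearMaps.

Section Transfer.
Local Open Scope ring_scope.
Variables (F : fieldType) (d1 : Order.disp_t) (A : finPOrderType d1) (rA : A -> nat)
  (d2 : Order.disp_t) (B : finPOrderType d2) (rB : B -> nat).
Variable c : Vpos rA -> Vpos rB -> F.
Hypothesis c_ideal : forall s, in_ideal (coef s) -> in_ideal (coef (Defs.hom c s)).

Lemma hom_tensor_in_ideal (x y : Vpos rA -> F) :
  in_ideal (tensor x y) -> in_ideal (tensor (lin c x) (lin c y)).
Proof.
move=> H; have /c_ideal H' : in_ideal (coef (tensor_elt x y)).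
  by apply: (in_ideal_ext H) => u; rewrite coef_tensor_elt.
by apply: (in_ideal_ext H') => u; rewrite coef_hom_tensor_elt.
Qed.

Lemma const_below_hom (p : Vpos rA) (q : Vpos rB) (y : Vpos rA -> F) : is_rank rA ->
  c p q != 0 -> const_below p y -> const_below q (lin c y).
Proof.
move=> HrA cpq Hp; apply: (tensor_in_ideal_const (x := lin c (delta p))); last first.
  by rewrite lin_delta.
apply/hom_tensor_in_ideal/const_tensor_in_ideal => // v.
by rewrite /delta; have [->|_] := eqVneq v p; rewrite ?eqxx.
Qed.

End Transfer.

Section InverseMatrices.
Local Open Scope ring_scope.
Variable F : fieldType.

Lemma lin_inverse (V W : finType) (c : V -> W -> F) (c' : W -> V -> F) :
  (forall v u, \sum_w c v w * c' w u = (u == v)%:R) -> forall y, lin c' (lin c y) =1 y.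
Proof.
move=> cc' y u; rewrite /lin; under eq_bigr do rewrite mulr_sumr.
rewrite exchange_big /= -[RHS]mul1r -(sum_delta predT y u).
apply: eq_bigr => v _; rewrite eq_sym -cc' mulr_sumr; apply: eq_bigr => w _; ring.
Qed.

(* From an isomorphism of the quotient algebras, the matrices of the degree-1
   parts are mutually inverse, since R_B has no degree-1 component. *)
Lemma hom_inverse_matrix (d1 : Order.disp_t) (A : finPOrderType d1) (rA : A -> nat)
  (d2 : Order.disp_t) (B : finPOrderType d2) (rB : B -> nat)
  (c : Vpos rA -> Vpos rB -> F) (c' : Vpos rB -> Vpos rA -> F) (v : Vpos rA) :
  eqB (Defs.hom c' (Defs.hom c [:: (1, [:: v])])) [:: (1, [:: v])] ->
  forall u, \sum_w c v w * c' w u = (u == v)%:R.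
Proof.
move=> H u; have := in_ideal_deg1 H u.
have gen_v a : coef [:: (1 : F, [:: v])] [:: a] = (a == v)%:R.
  by rewrite /coef big_seq1 /= eqseq_cons andbT eq_sym; case: eqP.
rewrite coef_cat coef_fscale coef_hom_deg1 gen_v mulN1r => /eqP; rewrite subr_eq0 => /eqP <-.
apply: eq_bigr => w _; rewrite coef_hom_deg1; congr (_ * _).
rewrite -[LHS]mul1r -(sum_delta predT (c^~ w) v).
by apply: eq_bigr => a _; rewrite gen_v mulrC.
Qed.

End InverseMatrices.

Section RankedOrder.
Variables (d : Order.disp_t) (X : finPOrderType d).

(* Induction on strict comparabilities: every x < y in a finite poset is
   built from coverings by transitivity (induction on the size of the open
   interval between x and y). *)
Lemma lt_covers_ind (R : X -> X -> Prop) :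
  (forall a b, covers b a -> R a b) ->
  (forall a m b, (a < m)%O -> (m < b)%O -> R a m -> R m b -> R a b) ->
  forall x y, (x < y)%O -> R x y.
Proof.
move=> Hcov Htrans; pose I (x y : X) := [set z | (x < z)%O && (z < y)%O].
have shrink (x y a b : X) : (x <= a)%O -> (b <= y)%O -> (I a b \subset I x y).
  move=> xa yb; apply/subsetP => z; rewrite !inE => /andP [az zb].
  by rewrite (le_lt_trans xa az) (lt_le_trans zb yb).
suff IH n x y : (#|I x y| < n)%N -> (x < y)%O -> R x y by move=> x y; apply: IH.
elim: n x y => // n IH x y hn xy.
case: (pickP (fun z => (x < z)%O && (z < y)%O)) => [z /andP [xz zy]|none]; last first.
  by apply: Hcov; rewrite /covers xy; apply/forallP => z; rewrite none.
apply: (Htrans x z y xz zy); apply: IH => //.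
- apply: (leq_trans (proper_card _) hn); apply/properP; split; first exact: shrink (ltW zy).
  by exists z; rewrite !inE ?xz ?zy ?ltxx.
- apply: (leq_trans (proper_card _) hn); apply/properP; split; first exact: shrink (ltW xz) _.
  by exists z; rewrite !inE ?xz ?zy ?ltxx.
Qed.

Lemma rank_lt (r : X -> nat) : is_rank r -> forall x y, (x < y)%O -> (r x < r y)%N.
Proof.
move=> [Hr _]; apply: lt_covers_ind => [a b /Hr ->//|a m b _ _]; exact: ltn_trans.
Qed.

End RankedOrder.

Lemma covers_hom_mono (dA : Order.disp_t) (A : finPOrderType dA) (rA : A -> nat)
  (dB : Order.disp_t) (B : finPOrderType dB) (rB : B -> nat) (g : Pge2 rA -> Pge2 rB) :
  is_rank rA ->
  (forall x y : Pge2 rA, covers (val x) (val y) -> covers (val (g x)) (val (g y))) ->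
  forall x y : Pge2 rA, (val x <= val y)%O -> (val (g x) <= val (g y))%O.
Proof.
move=> Hr Hc x y; rewrite le_eqVlt => /orP [/eqP /val_inj -> //|lt].
case: x y lt => a ha [b hb] /= lt; apply: ltW.
pose R a b := forall (ha : (2 <= rA a)%N) (hb : (2 <= rA b)%N),
  (val (g (exist _ a ha)) < val (g (exist _ b hb)))%O.
suff: R a b by apply.
apply: lt_covers_ind lt => [a' b' cba ha' hb'|a' m b' am mb Ram Rmb ha' hb'].
  by have /andP [] := Hc (exist _ b' hb') (exist _ a' ha') cba.
have hm : (2 <= rA m)%N by apply: leq_trans ha' (ltnW (rank_lt Hr am)).
exact: lt_trans (Ram ha' hm) (Rmb hm hb').
Qed.

Definition toV (d : Order.disp_t) (X : finPOrderType d) (r : X -> nat) (x : Pge2 r) : Vpos r :=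
  exist _ (val x) (leq_trans (isT : (1 <= 2)%N) (valP x)).

Lemma toV_ge2 (d : Order.disp_t) (X : finPOrderType d) (r : X -> nat) (x : Pge2 r) :
  (2 <= r (val (toV x)))%N.
Proof. exact: valP x. Qed.

Lemma toV_inj (d : Order.disp_t) (X : finPOrderType d) (r : X -> nat) : injective (@toV d X r).
Proof. by move=> x y /(congr1 val) /= /val_inj. Qed.

Lemma toV_onto (d : Order.disp_t) (X : finPOrderType d) (r : X -> nat) (v : Vpos r) :
  (2 <= r (val v))%N -> exists x : Pge2 r, toV x = v.
Proof. by move=> h2; exists (exist _ (val v) h2); apply: val_inj. Qed.

Section Matching.
Local Open Scope ring_scope.
Variables (F : fieldType) (d : Order.disp_t) (P : finPOrderType d) (rP : P -> nat)
  (d' : Order.disp_t) (Q : finPOrderType d') (rQ : Q -> nat).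
Local Notation V := (Vpos rP).
Local Notation W := (Vpos rQ).
Variables (c : V -> W -> F) (c' : W -> V -> F).
Hypotheses (HrP : is_rank rP) (HrQ : is_rank rQ) (Hnn : non_nesting P)
  (HS : forall p : P, (1 < rP p)%N -> (1 < #|Sset p|)%N)
  (c_graded : forall v w, rP (val v) != rQ (val w) -> c v w = 0)
  (c'_graded : forall w v, rQ (val w) != rP (val v) -> c' w v = 0)
  (c_ideal : forall s, in_ideal (coef s) -> in_ideal (coef (Defs.hom c s)))
  (c'_ideal : forall s, in_ideal (coef s) -> in_ideal (coef (Defs.hom c' s)))
  (cc' : forall v u, \sum_w c v w * c' w u = (u == v)%:R)
  (c'c : forall w u, \sum_v c' w v * c v u = (u == w)%:R).

Lemma rank_c v w : c v w != 0 -> rP (val v) = rQ (val w).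
Proof. by apply: contraNeq => /c_graded ->. Qed.

Lemma rank_c' w v : c' w v != 0 -> rQ (val w) = rP (val v).
Proof. by apply: contraNeq => /c'_graded ->. Qed.

(* Key step, using non-nesting: if c p q != 0 with p of rank at least 2,
   then the row q of c' is supported at p only.  Otherwise some v != p of
   the same rank occurs; an element w covered by v but not by p gives a
   delta w constant below p, hence below q, hence below v: impossible. *)
Lemma inverse_support (p : V) (q : W) (v : V) :
  (2 <= rP (val p))%N -> c p q != 0 -> c' q v != 0 -> v = p.
Proof.
move=> h2 cpq cqv; apply/eqP/negPn/negP => vp.
have h2v : (2 <= rP (val v))%N by rewrite -(rank_c' cqv) -(rank_c cpq).
have nvp : val v != val p by apply: contra vp => /eqP /val_inj ->.
have /subsetPn [z] := Hnn nvp (HS h2v) (HS h2); rewrite !inE => cvz npz.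
have z_pos : (0 < rP z)%N by move: h2v; rewrite (proj1 HrP _ _ cvz).
pose w : V := exist _ z z_pos.
have const_q := const_below_hom c_ideal HrP cpq (delta_const_below F (w := w) npz).
have const_v := const_below_hom c'_ideal HrQ cqv const_q.
apply: (not_const_below_covered (w := w) HrP h2v (HS h2v) cvz).
exact: const_below_ext (lin_inverse cc' _) const_v.
Qed.

(* Consequently the row p of c is supported at a single q: otherwise the
   identity c' c would have a zero diagonal entry at one of the q's. *)
Lemma unique_image (p : V) (q1 q2 : W) :
  (2 <= rP (val p))%N -> c p q1 != 0 -> c p q2 != 0 -> q1 = q2.
Proof.
move=> h2 c1 c2; apply/eqP/negPn/negP => n12.
have row_q2 g : \sum_v c' q2 v * g v = c' q2 p * g p.
  by apply: sum_support1 => v; apply: inverse_support h2 c2.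
have c0 : c' q2 p = 0.
  by apply/eqP; have /eqP := c'c q2 q1; rewrite row_q2 (negbTE n12) mulf_eq0 (negbTE c1) orbF.
by have /eqP := c'c q2 q2; rewrite row_q2 c0 mul0r eqxx eq_sym oner_eq0.
Qed.

(* Since c c' is the identity at p, the matched entry of c' is nonzero. *)
Lemma inverse_coef_neq0 (p : V) (q : W) :
  (2 <= rP (val p))%N -> c p q != 0 -> c' q p != 0.
Proof.
move=> h2 cpq; have := cc' p p.
rewrite (sum_support1 _ (i0 := q)) => [|w cw]; last exact: unique_image h2 cw cpq.
by rewrite eqxx; apply: contra_eq_neq => ->; rewrite mulr0 eq_sym oner_neq0.
Qed.

Lemma const_below_transfer (p : V) (q : W) (y : V -> F) :
  (2 <= rP (val p))%N -> c p q != 0 -> const_below p y <-> const_below q (lin c y).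
Proof.
move=> h2 cpq; split; first exact: const_below_hom.
move/(const_below_hom c'_ideal HrQ (inverse_coef_neq0 h2 cpq)).
exact: const_below_ext (lin_inverse cc' y).
Qed.

Lemma covers_transfer (p p' : V) (q q' : W) :
  (2 <= rP (val p))%N -> (2 <= rP (val p'))%N -> c p q != 0 -> c p' q' != 0 ->
  covers (val p) (val p') = covers (val q) (val q').
Proof.
move=> h2 h2' cpq cpq'.
have [w1 [w2 [c1 c2 n12]]] := two_covered HrP h2 (HS h2).
have not_const_p : exists y : V -> F, ~ const_below p y.
  by exists (delta w1); apply: delta_not_const_below c1 c2 n12.
have not_const_q : exists y : W -> F, ~ const_below q y.
  by case: not_const_p => y ny; exists (lin c y) => /(const_below_transfer _ h2 cpq).
have image_p' : lin c (delta p') =1 fun b => c p' q' * delta q' b.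
  move=> b; rewrite lin_delta /delta; have [->|nb] := eqVneq b q'; first by rewrite mulr1.
  by rewrite mulr0; apply/eqP; apply: contraNT nb => cb; rewrite (unique_image h2' cb cpq') eqxx.
apply/idP/idP => [/(covers_delta _ not_const_p) H|/(covers_delta _ not_const_q) H].
  apply/(covers_delta _ not_const_q) => C; apply: H.
  by apply/(const_below_transfer _ h2 cpq)/(const_below_ext (fsym image_p'))/const_belowZ.
apply/(covers_delta _ not_const_p) => /(const_below_transfer _ h2 cpq) C; apply: H.
by apply/(const_belowZ _ _ cpq')/(const_below_ext image_p').
Qed.

(* Every element of rank at least 2 has a partner under c, of the same
   rank, since c c' is the identity. *)
Lemma partner_in_Q (x : Pge2 rP) : exists y : Pge2 rQ, c (toV x) (toV y) != 0.
Proof.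
have /sum_nonzero_term [q cq _] : \sum_w c (toV x) w * c' w (toV x) != 0.
  by rewrite cc' eqxx oner_eq0.
have h2 : (2 <= rQ (val q))%N by rewrite -(rank_c cq) toV_ge2.
by have [y yq] := toV_onto h2; exists y; rewrite yq.
Qed.

(* Symmetrically, using that c' c is the identity. *)
Lemma partner_in_P (y : Pge2 rQ) : exists x : Pge2 rP, c (toV x) (toV y) != 0.
Proof.
have /sum_nonzero_term [p _ cp] : \sum_v c' (toV y) v * c v (toV y) != 0.
  by rewrite c'c eqxx oner_eq0.
have h2 : (2 <= rP (val p))%N by rewrite (rank_c cp) toV_ge2.
by have [x xp] := toV_onto h2; exists x; rewrite xp.
Qed.

Lemma partner_bijection : exists f : Pge2 rP -> Pge2 rQ, exists g : Pge2 rQ -> Pge2 rP,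
  [/\ cancel f g, cancel g f & forall x, c (toV x) (toV (f x)) != 0].
Proof.
pose f x := xchoose (partner_in_Q x); pose g y := xchoose (partner_in_P y).
have fP x : c (toV x) (toV (f x)) != 0 := xchooseP (partner_in_Q x).
have gP y : c (toV (g y)) (toV y) != 0 := xchooseP (partner_in_P y).
exists f, g; split=> // [x|y]; apply: toV_inj.
  apply/esym/(inverse_support (toV_ge2 (g (f x))) (gP _)).
  exact: inverse_coef_neq0 (toV_ge2 x) (fP x).
exact: unique_image (toV_ge2 (g y)) (fP _) (gP _).
Qed.

Lemma partner_order_iso : exists f : Pge2 rP -> Pge2 rQ,
  bijective f /\
  (forall x y : Pge2 rP, (val (f x) <= val (f y))%O = (val x <= val y)%O) /\
  (forall x : Pge2 rP, rQ (val (f x)) = rP (val x)).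
Proof.
have [f [g [fK gK fP]]] := partner_bijection.
have covers_f x y : covers (val (f x)) (val (f y)) = covers (val x) (val y).
  exact/esym/(covers_transfer (toV_ge2 x) (toV_ge2 y) (fP x) (fP y)).
have covers_g x y : covers (val (g x)) (val (g y)) = covers (val x) (val y).
  by rewrite -covers_f !gK.
exists f; split; first by exists g.
split=> [x y|x]; last by rewrite -(rank_c (fP x)).
apply/idP/idP => [le_fxy|]; last by apply: covers_hom_mono => // a b; rewrite covers_f.
by rewrite -(fK x) -(fK y); apply: covers_hom_mono le_fxy => // a b; rewrite covers_g.
Qed.

End Matching.

Unset Implicit Arguments. Set Strict Implicit. Set Printing Implicit Defensive.

Theorem mainTheorem15 (F : fieldType)
  d (P : finPOrderType d) (rP : P -> nat)
  d' (Q : finPOrderType d') (rQ : Q -> nat) :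
  is_rank rP -> unique_minimal P -> non_nesting P ->
  (forall p : P, (1 < rP p)%N -> (1 < #|Sset p|)%N) ->
  is_rank rQ -> unique_minimal Q ->
  B_iso F rP rQ ->
  exists f : Pge2 rP -> Pge2 rQ,
    bijective f /\
    (forall x y : Pge2 rP, (val (f x) <= val (f y))%O = (val x <= val y)%O) /\
    (forall x : Pge2 rP, rQ (val (f x)) = rP (val x)).
Proof.
move=> HrP _ Hnn HS HrQ _ [c [c' [c_gr [c'_gr [c_id [c'_id [inv_P inv_Q]]]]]]].
apply: (partner_order_iso HrP HrQ Hnn HS c_gr c'_gr c_id c'_id).
- by move=> v; apply: hom_inverse_matrix (inv_P v).
- by move=> w; apply: hom_inverse_matrix (inv_Q w).
Qed.
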